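(* Let $f:\mathbb{R}^n\to\mathbb{R}$ be continuously differentiable and bounded below, let $x,d\in\mathbb{R}^n$ with $\langle g,d\rangle<0$ where $g=\nabla f(x)$, and let $0<2\rho<\sigma<1$, $\eta=\frac{\sigma}{2(\sigma-\rho)}$. Say that $\alpha>0$ satisfies (W1) if $f(x+\alpha d)\le f(x)+\rho\alpha\langle g,d\rangle$, and satisfies (W2) if $\langle\nabla f(x+\alpha d),d\rangle\ge\sigma\langle g,d\rangle$. Set $\alpha_0'=0$ and let $\alpha_0''>0$ be any number at which (W1) fails (such a number exists). For $\ell=0,1,2,\dots$, with $x_\ell'=x+\alpha_\ell' d$, $x_\ell''=x+\alpha_\ell'' d$, define $$c_\ell=\alpha_\ell'+\frac{\alpha_\ell''-\alpha_\ell'}{2}\cdot\frac{-(\alpha_\ell''-\alpha_\ell')\langle\nabla f(x_\ell'),d\rangle}{f(x_\ell'')-f(x_\ell')-(\alpha_\ell''-\alpha_\ell')\langle\nabla f(x_\ell'),d\rangle},\qquad \tilde c_\ell=\max\{c_\ell,\ \eta\alpha_\ell'+(1-\eta)\alpha_\ell''\}.$$ If $\tilde c_\ell$ satisfies both (W1) and (W2), stop and output $\alpha=\tilde c_\ell$. Otherwise set $[\alpha_{\ell+1}',\alpha_{\ell+1}'']=[\alpha_\ell',\tilde c_\ell]$ if $\tilde c_\ell$ does not satisfy (W1), and $[\alpha_{\ell+1}',\alpha_{\ell+1}'']=[\tilde c_\ell,\alpha_\ell'']$ otherwise. Then this procedure is well defined and stops after finitely many iterations, i.e. there is a finite $\ell^*$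 such that $\alpha=\tilde c_{\ell^*}$ satisfies (W1) and (W2).
   Context: $\langle\cdot,\cdot\rangle$ is the Euclidean inner product on $\mathbb{R}^n$. (W1)–(W2) are the standard (weak) Wolfe–Powell conditions for the step $\alpha$ along $d$ at $x$. *)

From HB Require Import structures.
From mathcomp Require Import all_boot all_order all_algebra.
From mathcomp Require Import all_classical all_reals all_analysis.
Set Implicit Arguments. Unset Strict Implicit. Unset Printing Implicit Defensive.
Import Order.TTheory GRing.Theory Num.Theory.
Import numFieldNormedType.Exports.
Local Open Scope ring_scope.

Definition inner (R : realType) (n : nat) (u v : 'rV[R]_n) : R :=
  \sum_(i < n) u ord0 i * v ord0 i.

Definition grad (R : realType) (n : nat) (f : 'rV[R]_n -> R) (y : 'rV[R]_n)
  : 'rV[R]_n := \row_(i < n) ('d f y (delta_mx ord0 i : 'rV[R]_n)).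

Definition C1 (R : realType) (n : nat) (f : 'rV[R]_n -> R) : Prop :=
  (forall y, differentiable f y) /\ continuous (grad f).

Definition bounded_below (R : realType) (n : nat) (f : 'rV[R]_n -> R) : Prop :=
  exists m : R, forall y, m <= f y.

(* Wolfe conditions for the step alpha along d at x (positivity of alpha is
   stated separately). *)
Definition W1 (R : realType) (n : nat) (f : 'rV[R]_n -> R) (x d : 'rV[R]_n)
  (rho alpha : R) : Prop :=
  f (x + alpha *: d) <= f x + rho * alpha * inner (grad f x) d.

Definition W2 (R : realType) (n : nat) (f : 'rV[R]_n -> R) (x d : 'rV[R]_n)
  (sigma alpha : R) : Prop :=
  inner (grad f (x + alpha *: d)) d >= sigma * inner (grad f x) d.

Definition cdenom (R : realType) (n : nat) (f : 'rV[R]_n -> R) (x d : 'rV[R]_n)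
  (a1 a2 : R) : R :=
  f (x + a2 *: d) - f (x + a1 *: d)
    - (a2 - a1) * inner (grad f (x + a1 *: d)) d.

Definition c_of (R : realType) (n : nat) (f : 'rV[R]_n -> R) (x d : 'rV[R]_n)
  (a1 a2 : R) : R :=
  a1 + (a2 - a1) / 2 *
        ((- ((a2 - a1) * inner (grad f (x + a1 *: d)) d)) / cdenom f x d a1 a2).

Definition ctilde_of (R : realType) (n : nat) (f : 'rV[R]_n -> R) (x d : 'rV[R]_n)
  (eta a1 a2 : R) : R :=
  Num.max (c_of f x d a1 a2) (eta * a1 + (1 - eta) * a2).

(* The bracket [alpha'_l, alpha''_l] of the procedure.  The update rule is
   applied unconditionally; the procedure's stopping index is characterised in
   the theorem statement. *)
Fixpoint bracket (R : realType) (n : nat) (f : 'rV[R]_n -> R) (x d : 'rV[R]_n)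
  (rho eta a0 : R) (l : nat) : R * R :=
  match l with
  | O => (0, a0)
  | S k =>
    let: (a1, a2) := bracket f x d rho eta a0 k in
    let ct := ctilde_of f x d eta a1 a2 in
    if asbool (W1 f x d rho ct) then (ct, a2) else (a1, ct)
  end.

Definition ctilde_seq (R : realType) (n : nat) (f : 'rV[R]_n -> R) (x d : 'rV[R]_n)
  (rho eta a0 : R) (l : nat) : R :=
  ctilde_of f x d eta (bracket f x d rho eta a0 l).1 (bracket f x d rho eta a0 l).2.

Definition denom_seq (R : realType) (n : nat) (f : 'rV[R]_n -> R) (x d : 'rV[R]_n)
  (rho eta a0 : R) (l : nat) : R :=
  cdenom f x d (bracket f x d rho eta a0 l).1 (bracket f x d rho eta a0 l).2.

From HB Require Import structures.
From mathcomp Require Import all_boot all_order all_algebra.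
From mathcomp Require Import all_classical all_reals all_analysis.
From mathcomp Require Import ring lra.
Set Implicit Arguments. Unset Strict Implicit. Unset Printing Implicit Defensive.
Import Order.TTheory GRing.Theory Num.Theory.
Import numFieldNormedType.Exports.
Local Open Scope classical_set_scope.
Local Open Scope ring_scope.

(** Write phi t := f (x + t d) and g := phi'(0) < 0.  The procedure maintains a
    bracket [a', a''] in which a' satisfies (W1) but its slope phi'(a') is below
    sigma g (so it fails (W2)), while a'' violates (W1).  On such a bracket the
    denominator of c is positive and the safeguarded point c~ lies in
    [a' + (1 - eta)(a'' - a'), a' + eta (a'' - a')], with 1/2 <= eta < 1; hence
    the new bracket is again of this kind and its length shrinks by the factor
    eta.  If the procedure never stopped, the brackets would shrink to a point s.
    The mean value theorem gives, in every bracket, a point with slope above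
    rho g > sigma g, while the left endpoints have slope below sigma g; by
    continuity of phi' at s this is impossible. *)

Lemma continuous_innerl (R : realType) (n : nat) (d : 'rV[R]_n) :
  continuous (fun u : 'rV[R]_n => inner u d).
Proof.
rewrite /inner; apply: (@continuous_big _ _ +%R 0 xpredT); first exact: add_continuous.
move=> j _ u; apply: (@continuousM _ _ (fun u : 'rV[R]_n => u ord0 j)).
  exact: coord_continuous.
exact: cst_continuous.
Qed.

Lemma diff_inner_grad (R : realType) (n : nat) (f : 'rV[R]_n -> R) y v :
  'd f y v = inner (grad f y) v.
Proof.
rewrite /inner {1}(row_sum_delta v) linear_sum /=.
by apply: eq_bigr => i _; rewrite linearZ /= mxE mulrC.
Qed.

Lemma is_derive_line (R : realType) (n : nat) (f : 'rV[R]_n -> R) (x d : 'rV[R]_n) t :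
  differentiable f (x + t *: d) ->
  is_derive t (1 : R) (fun s : R => f (x + s *: d)) (inner (grad f (x + t *: d)) d).
Proof.
move=> df.
have quotE : (fun h : R => h^-1 *: (((fun s : R => f (x + s *: d)) \o shift t) (h *: 1)
                                    - f (x + t *: d)))
           = (fun h : R => h^-1 *: ((f \o shift (x + t *: d)) (h *: d) - f (x + t *: d))).
  apply/funext => h /=; congr (_ *: (f _ - _)).
  by rewrite [h *: 1]mulr1 scalerDl addrCA addrA.
have dphi : derivable (fun s : R => f (x + s *: d)) t 1.
  by rewrite /derivable quotE; exact: diff_derivable.
by split => //; rewrite /derive quotE -diff_inner_grad -deriveE.
Qed.

Lemma continuous_line_slope (R : realType) (n : nat) (f : 'rV[R]_n -> R) (x d : 'rV[R]_n) :
  continuous (grad f) -> continuous (fun t : R => inner (grad f (x + t *: d)) d).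
Proof.
move=> gc t.
have line : {for t, continuous (fun s : R => x + s *: d)}.
  by apply: continuousD; [exact: cst_continuous | exact: scalel_continuous].
by have := continuous_comp (continuous_comp line (gc _)) (@continuous_innerl _ _ d _).
Qed.

Lemma nested_intervals_meet (R : realType) (a1 a2 : nat -> R) :
  (forall k, a1 k <= a1 k.+1) -> (forall k, a2 k.+1 <= a2 k) ->
  (forall k, a1 k <= a2 k) -> exists s, forall k, a1 k <= s <= a2 k.
Proof.
move=> /nondecreasing_seqP incr1 /nonincreasing_seqP decr2 le12.
have ub k m : a1 k <= a2 m.
  have [km|mk] := leqP k m; first exact: le_trans (incr1 _ _ km) (le12 m).
  exact: le_trans (le12 k) (decr2 _ _ (ltnW mk)).
have ubS m : ubound (range a1) (a2 m) by move=> _ [k _ <-].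
have supS : has_sup (range a1) by split; [exists (a1 0%N), 0%N | exists (a2 0%N)].
exists (sup (range a1)) => k; apply/andP; split.
  by apply: sup_upper_bound => //; exists k.
by apply: ge_sup => //; exists (a1 0%N), 0%N.
Qed.

Lemma nested_intervals_continuous_gap (R : realType) (a1 a2 : nat -> R) (h : R -> R)
    (lo hi : R) :
  (forall k, a1 k <= a1 k.+1) -> (forall k, a2 k.+1 <= a2 k) ->
  (fun k => a2 k - a1 k) @ \oo --> 0 -> continuous h ->
  (forall k, h (a1 k) <= lo) ->
  (forall k, exists2 y, a1 k <= y <= a2 k & hi <= h y) ->
  hi <= lo.
Proof.
move=> incr1 decr2 len0 hc hlo hhi; rewrite leNgt; apply/negP => lohi.
have le12 k : a1 k <= a2 k by have [y /andP[y1 y2] _] := hhi k; exact: le_trans y2.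
have [s s_in] := nested_intervals_meet incr1 decr2 le12.
have e_gt0 : 0 < (hi - lo) / 2 by apply: divr_gt0; lra.
have /cvgrPdist_lt/(_ _ e_gt0)/nbhs_ballP[del del_gt0 near_s] := hc s.
move/cvgrPdist_lt: len0 => /(_ _ del_gt0) [N _ /(_ N (leqnn N))].
rewrite sub0r normrN ger0_norm ?subr_ge0 // => lenN.
have [y /andP[y1 y2] hy] := hhi N; have /andP[s1 s2] := s_in N.
have close z : a1 N <= z <= a2 N -> `|h s - h z| < (hi - lo) / 2.
  move=> /andP[z1 z2]; apply: near_s.
  by rewrite -ball_normE /= ltr_distlC; apply/andP; split; lra.
have := close (a1 N); have := close y; rewrite y1 y2 lexx le12 /=.
have := hlo N; move=> hN /(_ isT) + /(_ isT).
rewrite !ltr_distlC => /andP[? ?] /andP[? ?]; lra.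
Qed.

Lemma eta_bounds (R : realFieldType) (rho sigma : R) :
  0 < 2 * rho -> 2 * rho < sigma ->
  1 / 2 <= sigma / (2 * (sigma - rho)) /\ sigma / (2 * (sigma - rho)) < 1.
Proof.
move=> rho_gt0 rho_lt_sigma.
have sr_gt0 : 0 < sigma - rho by lra.
have sr_neq0 : sigma - rho != 0 by rewrite gt_eqF.
split; rewrite -subr_ge0 || rewrite -subr_gt0.
  have -> : sigma / (2 * (sigma - rho)) - 1 / 2 = rho / (2 * (sigma - rho)).
    by field; rewrite sr_neq0.
  apply: divr_ge0; lra.
have -> : 1 - sigma / (2 * (sigma - rho)) = (sigma - 2 * rho) / (2 * (sigma - rho)).
  by field; rewrite sr_neq0.
apply: divr_gt0; lra.
Qed.

(* The point c minimises the quadratic interpolating phi(a1) = p1, phi'(a1) = q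
   and phi(a2) = p2; the gap to a1 + eta (a2 - a1) equals
   (a2 - a1) (sigma (p2 - p1) - rho (a2 - a1) q) / (2 (sigma - rho) D). *)
Lemma interpolation_point_bound (R : realFieldType) (a1 a2 p1 p2 q g rho sigma f0 : R) :
  a1 < a2 -> p1 <= f0 + rho * a1 * g -> f0 + rho * a2 * g < p2 ->
  q < sigma * g -> g < 0 -> 0 < 2 * rho -> 2 * rho < sigma ->
  let D := p2 - p1 - (a2 - a1) * q in
  0 < D /\
  a1 + (a2 - a1) / 2 * ((- ((a2 - a1) * q)) / D) <
    a1 + sigma / (2 * (sigma - rho)) * (a2 - a1).
Proof.
move=> a12 hp1 hp2 hq hg rho_gt0 rho_lt_sigma D.
have sigma_g : sigma * g < rho * g by nra.
have D_gt0 : 0 < D by rewrite /D; nra.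
split => //; rewrite -subr_gt0.
have D_neq0 : D != 0 by rewrite gt_eqF.
have sr_neq0 : sigma - rho != 0 by apply/eqP; lra.
have -> : a1 + sigma / (2 * (sigma - rho)) * (a2 - a1)
          - (a1 + (a2 - a1) / 2 * (- ((a2 - a1) * q) / D))
        = (a2 - a1) * (sigma * (p2 - p1) - rho * (a2 - a1) * q)
          / (2 * (sigma - rho) * D).
  by rewrite /D in D_neq0 *; field; rewrite D_neq0 sr_neq0.
have num_gt0 : 0 < sigma * (p2 - p1) - rho * (a2 - a1) * q.
  have : 0 < sigma * (p2 - p1 - rho * g * (a2 - a1)) by apply: mulr_gt0; nra.
  have : 0 < (a2 - a1) * rho * (sigma * g - q) by apply: mulr_gt0; nra.
  nra.
by apply: divr_gt0; apply: mulr_gt0 => //; lra.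
Qed.

Lemma sufficient_decrease_chord (R : realFieldType) (a1 a2 p1 p2 f0 g rho : R) :
  p1 <= f0 + rho * a1 * g -> f0 + rho * a2 * g < p2 -> rho * g * (a2 - a1) < p2 - p1.
Proof. by move=> hp1 hp2; lra. Qed.

Lemma safeguarded_point_bounds (R : realFieldType) (a1 a2 c eta : R) :
  a1 < a2 -> eta < 1 ->
  a1 + (1 - eta) * (a2 - a1) <= c -> c <= a1 + eta * (a2 - a1) ->
  [/\ a1 < c, c < a2, a2 - c <= eta * (a2 - a1) & c - a1 <= eta * (a2 - a1)].
Proof. by move=> a12 eta_lt1 c_lo c_hi; split; nra. Qed.

Section WolfeBracketing.
Variables (R : realType) (n : nat) (f : 'rV[R]_n -> R) (x d : 'rV[R]_n).
Variables (rho sigma eta : R).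
Hypothesis descent : inner (grad f x) d < 0.
Hypothesis rho_gt0 : 0 < 2 * rho.
Hypothesis rho_lt_sigma : 2 * rho < sigma.
Hypothesis sigma_lt1 : sigma < 1.
Hypothesis eta_def : eta = sigma / (2 * (sigma - rho)).

Local Notation g := (inner (grad f x) d).
Local Notation slope t := (inner (grad f (x + t *: d)) d).
Local Notation ctilde := (ctilde_of f x d eta).
Local Notation br a0 k := (bracket f x d rho eta a0 k).

Let rho_pos : 0 < rho. Proof. have := rho_gt0; lra. Qed.
Let sigma_g_lt : sigma * g < rho * g.
Proof. by rewrite ltr_nM2r //; have := rho_gt0; have := rho_lt_sigma; lra. Qed.
Let eta_ge_half : 1 / 2 <= eta.
Proof. by rewrite eta_def; case: (eta_bounds rho_gt0 rho_lt_sigma). Qed.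
Let eta_lt1 : eta < 1.
Proof. by rewrite eta_def; case: (eta_bounds rho_gt0 rho_lt_sigma). Qed.
Let eta_ge0 : 0 <= eta. Proof. have := eta_ge_half; lra. Qed.
Let two_eta_ge1 : 1 <= 2 * eta. Proof. have := eta_ge_half; lra. Qed.

Lemma exists_W1_violation : bounded_below f -> exists a, 0 < a /\ ~ W1 f x d rho a.
Proof.
move=> [m hm].
have rg_lt0 : rho * g < 0 by rewrite pmulr_rlt0.
pose a := Num.max 1 ((f x - m + 1) / (- (rho * g))).
exists a; split; first by rewrite lt_max ltr01.
move=> W1a; have := hm (x + a *: d).
have : (f x - m + 1) / (- (rho * g)) <= a by rewrite le_max lexx orbT.
rewrite ler_pdivrMr ?oppr_gt0 //; move: W1a; rewrite /W1; lra.
Qed.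

Definition wolfe_bracket (a1 a2 : R) : Prop :=
  [/\ 0 <= a1, a1 < a2, W1 f x d rho a1, slope a1 < sigma * g & ~ W1 f x d rho a2].

Lemma wolfe_bracket_init a0 : 0 < a0 -> ~ W1 f x d rho a0 -> wolfe_bracket 0 a0.
Proof.
move=> a0_gt0 notW1; split => //.
  by rewrite /W1 scale0r addr0 mulr0 mul0r addr0.
by rewrite scale0r addr0 -subr_lt0 -[X in X - _]mul1r -mulrBl pmulr_rlt0 // subr_gt0.
Qed.

Lemma wolfe_bracket_ctilde a1 a2 : wolfe_bracket a1 a2 ->
  [/\ 0 < cdenom f x d a1 a2,
      a1 + (1 - eta) * (a2 - a1) <= ctilde a1 a2
    & ctilde a1 a2 <= a1 + eta * (a2 - a1)].
Proof.
move=> [_ a12 W1a1 slope1 notW1a2].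
have W1a2 : f x + rho * a2 * g < f (x + a2 *: d) by rewrite ltNge; apply/negP.
have [D_gt0 c_lt] := interpolation_point_bound a12 W1a1 W1a2 slope1 descent
                       rho_gt0 rho_lt_sigma.
rewrite -eta_def in c_lt; split.
- exact: D_gt0.
- rewrite /ctilde_of.
  have -> : eta * a1 + (1 - eta) * a2 = a1 + (1 - eta) * (a2 - a1) by ring.
  by rewrite le_max lexx orbT.
rewrite /ctilde_of ge_max (ltW c_lt) /= -subr_ge0.
have -> : a1 + eta * (a2 - a1) - (eta * a1 + (1 - eta) * a2)
          = (2 * eta - 1) * (a2 - a1) by ring.
by apply: mulr_ge0; rewrite subr_ge0 // ltW.
Qed.

Definition wolfe_update (p : R * R) : R * R :=
  let: (a1, a2) := p in
  if asbool (W1 f x d rho (ctilde a1 a2)) then (ctilde a1 a2, a2) else (a1, ctilde a1 a2).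

Lemma bracketS a0 k : br a0 k.+1 = wolfe_update (br a0 k).
Proof. by []. Qed.

Definition wolfe_stop (c : R) : Prop := W1 f x d rho c /\ W2 f x d sigma c.

Lemma wolfe_update_bracket (p : R * R) :
  wolfe_bracket p.1 p.2 -> ~ wolfe_stop (ctilde p.1 p.2) ->
  let q := wolfe_update p in
  [/\ wolfe_bracket q.1 q.2, p.1 <= q.1, q.2 <= p.2 & q.2 - q.1 <= eta * (p.2 - p.1)].
Proof.
case: p => a1 a2 /= br12 nstop; have [_ c_lo c_hi] := wolfe_bracket_ctilde br12.
case: br12 => a1_ge0 a12 W1a1 slope1 notW1a2.
have [c_gt c_lt len_r len_l] := safeguarded_point_bounds a12 eta_lt1 c_lo c_hi.
rewrite /wolfe_update; set c := ctilde a1 a2 in c_gt c_lt len_r len_l nstop *.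
case: (asboolP (W1 f x d rho c)) => W1c /=.
  have slope_c : slope c < sigma * g.
    by rewrite ltNge; apply/negP => W2c; apply: nstop.
  split; [split | exact: ltW | exact: lexx | exact: len_r] => //.
  exact: le_trans a1_ge0 (ltW c_gt).
by split; [split | exact: lexx | exact: ltW | exact: len_l].
Qed.

Lemma bracket_invariant a0 : 0 < a0 -> ~ W1 f x d rho a0 ->
  forall k, (forall j, (j < k)%N -> ~ wolfe_stop (ctilde_seq f x d rho eta a0 j)) ->
  wolfe_bracket (br a0 k).1 (br a0 k).2 /\ (br a0 k).2 - (br a0 k).1 <= a0 * eta ^+ k.
Proof.
move=> a0_gt0 notW1a0; elim => [|k IH] nstop.
  by rewrite expr0 mulr1 subr0; split; [exact: wolfe_bracket_init|].
have [brk lenk] := IH (fun j jk => nstop j (ltnW jk)).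
have [br' _ _ len'] := wolfe_update_bracket brk (nstop k (ltnSn k)).
split; rewrite bracketS //.
by rewrite exprS mulrCA; apply: (le_trans len'); apply: ler_wpM2l.
Qed.

Lemma ctilde_seq_wellposed a0 k : 0 < a0 -> ~ W1 f x d rho a0 ->
  (forall j, (j < k)%N -> ~ wolfe_stop (ctilde_seq f x d rho eta a0 j)) ->
  denom_seq f x d rho eta a0 k != 0 /\ 0 < ctilde_seq f x d rho eta a0 k.
Proof.
move=> a0_gt0 notW1a0 nstop.
have [brk _] := bracket_invariant a0_gt0 notW1a0 nstop.
have [D_gt0 c_lo c_hi] := wolfe_bracket_ctilde brk.
case: brk => a1_ge0 a12 _ _ _.
have [c_gt _ _ _] := safeguarded_point_bounds a12 eta_lt1 c_lo c_hi.
split; first by rewrite /denom_seq gt_eqF.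
exact: le_lt_trans a1_ge0 c_gt.
Qed.

Hypothesis f_diff : forall y, differentiable f y.

Lemma wolfe_bracket_slope a1 a2 : wolfe_bracket a1 a2 ->
  exists2 xi, a1 <= xi <= a2 & rho * g <= slope xi.
Proof.
move=> [_ a12 W1a1 _ notW1a2].
have W1a2 : f x + rho * a2 * g < f (x + a2 *: d) by rewrite ltNge; apply/negP.
have dphi t : t \in `]a1, a2[ ->
    is_derive t (1 : R) (fun s : R => f (x + s *: d)) (slope t).
  by move=> _; exact: is_derive_line.
have phi_cont : {within `[a1, a2], continuous (fun s : R => f (x + s *: d))}.
  apply: derivable_within_continuous => t _.
  by have [] := is_derive_line (f_diff (x + t *: d)).
have [c c_in phiE] := MVT a12 dphi phi_cont.
exists c; first by move: c_in; rewrite in_itv /= => /andP[c1 c2]; rewrite !ltW.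
have len_gt0 : 0 < a2 - a1 by rewrite subr_gt0.
by rewrite -(ler_pM2r len_gt0) -phiE; exact: ltW (sufficient_decrease_chord W1a1 W1a2).
Qed.

Hypothesis grad_cont : continuous (grad f).

Lemma wolfe_bracketing_stops a0 : 0 < a0 -> ~ W1 f x d rho a0 ->
  exists k, wolfe_stop (ctilde_seq f x d rho eta a0 k).
Proof.
move=> a0_gt0 notW1a0.
case: (pselect (exists k, wolfe_stop (ctilde_seq f x d rho eta a0 k))) => // nostop.
have nstop k : ~ wolfe_stop (ctilde_seq f x d rho eta a0 k).
  by move=> ?; apply: nostop; exists k.
have inv k := bracket_invariant a0_gt0 notW1a0 (fun j _ => nstop j) (k := k).
have step k := wolfe_update_bracket (inv k).1 (nstop k).
have len0 : (fun k => (br a0 k).2 - (br a0 k).1) @ \oo --> 0.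
  apply: (@squeeze_cvgr _ _ _ _ (fun=> 0) (fun k => a0 * eta ^+ k)).
  - apply: filterE => k; have [[_ a12 _ _ _] lenk] := inv k.
    by rewrite lenk subr_ge0 ltW.
  - exact: cvg_cst.
  - by apply: cvg_geometric; rewrite ger0_norm.
have incr k : (br a0 k).1 <= (br a0 k.+1).1 by have [_ ? _ _] := step k.
have decr k : (br a0 k.+1).2 <= (br a0 k).2 by have [_ _ ? _] := step k.
have slope_lo k : slope (br a0 k).1 <= sigma * g by have [[_ _ _ /ltW ? _] _] := inv k.
have := nested_intervals_continuous_gap
  (a1 := fun k => (br a0 k).1) (a2 := fun k => (br a0 k).2) incr decr len0
  (continuous_line_slope (x := x) (d := d) grad_cont) slope_lo
  (fun k => wolfe_bracket_slope (inv k).1).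
by rewrite leNgt sigma_g_lt.
Qed.

End WolfeBracketing.

Theorem lemma2 (R : realType) (n : nat) (f : 'rV[R]_n -> R) (x d : 'rV[R]_n)
  (rho sigma : R) :
  C1 f -> bounded_below f ->
  inner (grad f x) d < 0 ->
  0 < 2 * rho -> 2 * rho < sigma -> sigma < 1 ->
  let eta := sigma / (2 * (sigma - rho)) in
  (exists a : R, 0 < a /\ ~ W1 f x d rho a) /\
  (forall a0 : R, 0 < a0 -> ~ W1 f x d rho a0 ->
   exists l : nat,
     (forall k : nat, (k <= l)%N -> denom_seq f x d rho eta a0 k != 0) /\
     (forall k : nat, (k < l)%N ->
        ~ (W1 f x d rho (ctilde_seq f x d rho eta a0 k) /\
           W2 f x d sigma (ctilde_seq f x d rho eta a0 k))) /\
     0 < ctilde_seq f x d rho eta a0 l /\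
     W1 f x d rho (ctilde_seq f x d rho eta a0 l) /\
     W2 f x d sigma (ctilde_seq f x d rho eta a0 l)).
Proof.
move=> [f_diff grad_cont] f_bdd descent rho_gt0 rho_lt_sigma sigma_lt1 eta.
have eta_def : eta = sigma / (2 * (sigma - rho)) by [].
split; first exact: exists_W1_violation descent rho_gt0 f_bdd.
move=> a0 a0_gt0 notW1a0.
have [k0 stop_k0] := wolfe_bracketing_stops descent rho_gt0 rho_lt_sigma sigma_lt1
                       eta_def f_diff grad_cont a0_gt0 notW1a0.
pose stop k := wolfe_stop f x d rho sigma (ctilde_seq f x d rho eta a0 k).
have [l /asboolP stop_l min_l] :=
  ex_minnP (ex_intro (fun k => `[< stop k >]) k0 (asboolT stop_k0)).
have nstop j : (j < l)%N -> ~ stop j by move=> jl /asboolP /min_l; rewrite leqNgt jl.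
have wellposed k : (k <= l)%N ->
    denom_seq f x d rho eta a0 k != 0 /\ 0 < ctilde_seq f x d rho eta a0 k.
  move=> kl; have := ctilde_seq_wellposed (k := k) descent rho_gt0 rho_lt_sigma
                       sigma_lt1 eta_def a0_gt0 notW1a0.
  by apply=> j jk; exact: nstop (leq_trans jk kl).
exists l; split=> [k kl|]; first by have [] := wellposed k kl.
split; first exact: nstop.
by have [_ c_gt0] := wellposed l (leqnn l).
Qed.
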